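(* For $k>3$ the Tanaka prolongation of the truncated double-graded free Lie algebra $\mathfrak{n}_k$ is supported in non-positive grading: $\hat{\mathfrak{n}}_k=\mathfrak{n}_k\oplus\mathfrak{g}_0$ with $\mathfrak{g}_0=\mathfrak{gl}(\mathfrak{g}_{-1})$.
   Context: The double-graded free Lie algebra with two-dimensional fundamental space is $\mathfrak{n}_\infty=\bigoplus_{i<0}\mathfrak{g}_i$ with $\mathfrak{g}_{-1}=\langle e_{10},e_{01}\rangle$, $e_{11}=[e_{10},e_{01}]$, and $\mathfrak{g}_{-j-1}=\langle e_{j,1},e_{j-1,2},\dots,e_{1,j}\rangle$, the only relations being $[e_{10},e_{i,j+1}]=[e_{01},e_{i+1,j}]=e_{i+1,j+1}$ (and $[e_{10},e_{i,j}]=e_{i+1,j}$, $[e_{01},e_{i,j}]=e_{i,j+1}$). The truncated algebra is $\mathfrak{n}_k=\mathfrak{g}_{-k}\oplus\dots\oplus\mathfrak{g}_{-1}$, with brackets between $\mathfrak{g}_{-i}$ and $\mathfrak{g}_{-j}$ zero when $i+j>k$. The Tanaka prolongation $\hat{\mathfrak{m}}=\bigoplus_i\mathfrak{g}_i$ of a fundamental graded nilpotent Lie algebra $\mathfrak{m}=\bigoplus_{i<0}\mathfrak{g}_i$ is the maximal graded Lie algebra whose negative part is $\mathfrak{m}$ and in which no nonzero element of non-negative degree commutes with all of $\mathfrak{g}_{-1}$; $\mathfrak{g}_0$ is the algebra of degree-zero derivations of $\mathfrak{m}$ (not required to preserve the splitting of $\mathfrak{g}_{-1}$), and $\mathfrak{g}_i$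 for $i>0$ is built successively. *)

From HB Require Import structures.
From mathcomp Require Import all_boot all_order all_algebra.
Set Implicit Arguments. Unset Strict Implicit. Unset Printing Implicit Defensive.
Import Order.TTheory GRing.Theory Num.Theory.
Local Open Scope ring_scope.

(* Generic setting: a graded nilpotent Lie algebra m = (+)_{j>=1} g_{-j}     *)
(* given by a finite basis B, a depth function dep : B -> nat (basis vector *)
(* b lies in g_{-(dep b)}), and structure constants cst a b e, meaning      *)
(*        [a, b] = \sum_e cst a b e * e .                                   *)
(* Vectors of m are coordinate functions B -> F.                            *)

Definition mbr (F : fieldType) (B : finType) (cst : B -> B -> B -> F)
  (v : B -> F) (b : B) : B -> F :=
  fun e => \sum_(a : B) v a * cst a b e.

Definition dsum (B : finType) (dep : B -> nat) (s : seq B) : nat :=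
  (\sum_(b <- s) dep b)%N.

Definition homog (F : fieldType) (B : finType) (dep : B -> nat) (j : nat)
  (v : B -> F) : Prop :=
  forall a, v a != 0 -> dep a = j.

(* An element u of degree d >= 0 of the prolongation is encoded by the       *)
(* function E : seq B -> (B -> F) of its iterated brackets                  *)
(*     E [:: b1; ...; br] = [...[[u, b1], b2], ..., br]                      *)
(* which is a vector of m as soon as the degree d - (dep b1 + ... + dep br)  *)
(* is negative (E is normalized to 0 on the other sequences).  Thus          *)
(* s |-> E (b :: s) encodes u(b) = [u, b].                                   *)
(* [tanaka_in cst dep n d E] (with fuel n > d) says that E encodes an        *)
(* element of g_d, following Tanaka's successive construction:               *)
(*   g_d = { u in (+)_{i<0} Hom(g_i, g_{i+d}) :                              *)
(*            u([x,y]) = [u x, y] + [x, u y] }                               *)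
(* where g_{i+d} for i+d >= 0 is the previously constructed component, and   *)
(* for w in g_l (l >= 0), [w, y] = w(y), [y, w] = - w(y).                    *)
(* For d = 0 this is the algebra of degree-0 derivations of m.               *)
Fixpoint tanaka_in (F : fieldType) (B : finType) (cst : B -> B -> B -> F)
  (dep : B -> nat) (n d : nat) (E : seq B -> B -> F) {struct n} : Prop :=
  match n with
  | 0 => False
  | n'.+1 =>
    [/\ (* normalization: E s is meaningless (set to 0) while the degree >= 0 *)
        forall s, (dsum dep s <= d)%N -> forall e, E s e = 0,
        forall s, (d < dsum dep s)%N -> homog dep (dsum dep s - d) (E s),
        forall s b, (d < dsum dep s)%N ->
          forall e, E (rcons s b) e = mbr cst (E s) b e,
        (* u(b) has degree d - dep b; if >= 0 it lies in that component *)
        forall b, (dep b <= d)%N -> tanaka_in cst dep n' (d - dep b) (fun s => E (b :: s))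
      & (* derivation rule: [u,[a,b]] = [[u,a],b] - [[u,b],a] *)
        forall a b s e,
          \sum_(c : B) cst a b c * E (c :: s) e = E (a :: b :: s) e - E (b :: a :: s) e ]
  end.

Definition tanaka_comp (F : fieldType) (B : finType) (cst : B -> B -> B -> F)
  (dep : B -> nat) (d : nat) (E : seq B -> B -> F) : Prop :=
  tanaka_in cst dep d.+1 d E.

(* Basis: e_{10}, e_{01} (degree -1) and e_{ij}, i,j >= 1, i+j <= k          *)
(* (degree -(i+j)).                                                          *)
Definition nk_pred (k : nat) (x : 'I_k.+1 * 'I_k.+1) : bool :=
  let i := nat_of_ord x.1 in let j := nat_of_ord x.2 in
  ((i + j)%N == 1%N) || [&& (1 <= i)%N, (1 <= j)%N & (i + j <= k)%N].

Definition nkB (k : nat) := {x : 'I_k.+1 * 'I_k.+1 | @nk_pred k x}.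

Definition nk_i (k : nat) (x : nkB k) : nat := nat_of_ord (val x).1.
Definition nk_j (k : nat) (x : nkB k) : nat := nat_of_ord (val x).2.

Definition nk_dep (k : nat) (x : nkB k) : nat := (nk_i x + nk_j x)%N.

(* sign of [x, y] (which, when nonzero, is +- e_{x_i + y_i, x_j + y_j}):
   [e10,e01] = e11 = -[e01,e10]; [e10,e_ij] = e_{i+1,j}, [e01,e_ij] = e_{i,j+1}
   (i,j >= 1) and antisymmetry; brackets between elements of degree <= -2
   vanish; brackets landing in degree < -k vanish (truncation, automatic
   since the target must be a basis vector of n_k). *)
Definition nk_sgn (F : fieldType) (k : nat) (x y : nkB k) : F :=
  if nk_dep x == 1%N then
    if nk_dep y == 1%N then
      (if (nk_i x == 1%N) && (nk_j y == 1%N) then 1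
       else if (nk_j x == 1%N) && (nk_i y == 1%N) then -1 else 0)
    else 1
  else if nk_dep y == 1%N then -1 else 0.

Definition nk_cst (F : fieldType) (k : nat) (x y e : nkB k) : F :=
  if (nk_i e == nk_i x + nk_i y)%N && (nk_j e == nk_j x + nk_j y)%N
  then @nk_sgn F k x y else 0.

(* Since n_k is generated by g_{-1} = <e10, e01>, an element of non-negative degree of
   the prolongation is determined by its values on g_{-1}.  In degree 0 one checks that
   every endomorphism of g_{-1} extends to a derivation, given by an explicit formula on
   the e_{ij}.  In positive degree it suffices to show g_1 = 0, because u in g_d is
   determined by u(g_{-1}), which lies in g_{d-1}.  For u in g_1 the derivations u(e10)
   and u(e01) are determined by eight numbers; evaluating the truncation relations
   [e10, e_{k-1,1}] = [e01, e_{1,k-1}] = 0 through the derivation rule gives linear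
   equations which, in characteristic 0 and for k > 3, force all of them to vanish. *)

From HB Require Import structures.
From mathcomp Require Import all_boot all_order all_algebra.
From mathcomp Require Import zify ring.
Import Order.TTheory GRing.Theory Num.Theory.
Local Open Scope ring_scope.
Set Implicit Arguments. Unset Strict Implicit.

(** * Tanaka prolongation of an algebra given by structure constants *)

Section Prolongation.
Variables (F : fieldType) (B : finType) (cst : B -> B -> B -> F) (dep : B -> nat).
Local Notation br := (mbr cst).
Local Notation tanaka := (tanaka_in cst dep).

Lemma mbr_ext (v w : B -> F) b : v =1 w -> br v b =1 br w b.
Proof. by move=> vw e; apply: eq_bigr => a _; rewrite vw. Qed.

Lemma mbr0 b e : br (fun=> 0) b e = 0.
Proof. by rewrite /mbr big1 // => a _; rewrite mul0r. Qed.

Lemma mbrB (v w : B -> F) b e : br (fun e => v e - w e) b e = br v b e - br w b e.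
Proof. by rewrite /mbr -sumrB; apply: eq_bigr => a _; rewrite mulrBl. Qed.

Lemma mbr_sum (l : B -> F) (w : B -> B -> F) b e :
  br (fun e => \sum_c l c * w c e) b e = \sum_c l c * br (w c) b e.
Proof.
rewrite /mbr; under eq_bigr do rewrite big_distrl.
rewrite exchange_big; apply: eq_bigr => c _; rewrite big_distrr.
by apply: eq_bigr => a _ /=; rewrite mulrA.
Qed.

Lemma homogB j (v w : B -> F) :
  homog dep j v -> homog dep j w -> homog dep j (fun e => v e - w e).
Proof.
move=> hv hw a; case: (v a =P 0) => [-> | /eqP /hv //].
by rewrite sub0r oppr_eq0; apply: hw.
Qed.

Lemma dsum_cons b s : dsum dep (b :: s) = (dep b + dsum dep s)%N.
Proof. by rewrite /dsum big_cons. Qed.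

Lemma dsum1 b : dsum dep [:: b] = dep b.
Proof. by rewrite /dsum big_seq1. Qed.

Lemma tanaka_inB n d E1 E2 : tanaka n d E1 -> tanaka n d E2 ->
  tanaka n d (fun s e => E1 s e - E2 s e).
Proof.
elim: n d E1 E2 => [|n IH] d E1 E2 //= [N1 H1 C1 D1 R1] [N2 H2 C2 D2 R2].
split.
- by move=> s hs e; rewrite N1 ?N2 ?subr0.
- by move=> s hs; apply: homogB; [apply: H1 | apply: H2].
- by move=> s b hs e; rewrite mbrB C1 ?C2.
- by move=> b hb; apply: IH; [apply: D1 | apply: D2].
- move=> a b s e; under eq_bigr do rewrite mulrBr.
  by rewrite sumrB R1 R2; ring.
Qed.

Lemma der_rule_anti (D : B -> B -> F) a b e :
  (forall a' b' c, cst b' a' c = - cst a' b' c) ->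
  \sum_c cst a b c * D c e = br (D a) b e - br (D b) a e ->
  \sum_c cst b a c * D c e = br (D b) a e - br (D a) b e.
Proof.
move=> anti rule; under eq_bigr do rewrite anti mulNr.
by rewrite sumrN rule opprB.
Qed.

Hypothesis dep_gt0 : forall b, (0 < dep b)%N.
Hypothesis cst_graded : forall a b e, cst a b e != 0 -> dep e = (dep a + dep b)%N.

Lemma mbr_homog j (v : B -> F) b : homog dep j v -> homog dep (j + dep b) (br v b).
Proof.
move=> hv e; rewrite /mbr; case: (pickP (fun a => v a * cst a b e != 0)) => [a|v0].
  by rewrite mulf_eq0 negb_or => /andP[/hv <- /cst_graded ->].
by rewrite big1 ?eqxx // => a _; apply/eqP/negbFE/v0.
Qed.

Section Derivations.
Variable D : B -> B -> F.

Definition tanaka_of_der (s : seq B) : B -> F :=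
  if s is c :: s' then foldl br (D c) s' else fun=> 0.

Lemma foldl_mbr_ext s (v w : B -> F) : v =1 w -> foldl br v s =1 foldl br w s.
Proof. by elim: s v w => [|b s IH] v w vw //=; apply/IH/mbr_ext. Qed.

Lemma foldl_mbrB s (v w : B -> F) e :
  foldl br (fun e => v e - w e) s e = foldl br v s e - foldl br w s e.
Proof.
elim: s v w => [|b s IH] v w //=; rewrite -IH; apply: foldl_mbr_ext => e'.
exact: mbrB.
Qed.

Lemma foldl_mbr_sum s (l : B -> F) (w : B -> B -> F) e :
  foldl br (fun e => \sum_c l c * w c e) s e = \sum_c l c * foldl br (w c) s e.
Proof.
elim: s w => [|b s IH] w //=; rewrite -IH; apply: foldl_mbr_ext => e'.
exact: mbr_sum.
Qed.

Lemma foldl_mbr_homog s j (v : B -> F) : homog dep j v -> homog dep (j + dsum dep s) (foldl br v s).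
Proof.
elim: s j v => [|b s IH] j v hv /=; first by rewrite /dsum big_nil addn0.
by rewrite dsum_cons addnA; apply/IH/mbr_homog.
Qed.

Lemma tanaka_of_derP :
  (forall c, homog dep (dep c) (D c)) ->
  (forall a b e, \sum_c cst a b c * D c e = br (D a) b e - br (D b) a e) ->
  tanaka 1 0 tanaka_of_der.
Proof.
move=> Dhomog Dder; split=> //.
- by case=> [|c s] //; rewrite dsum_cons; have := dep_gt0 c; lia.
- case=> [|c s]; first by rewrite /dsum big_nil.
  by rewrite subn0 dsum_cons => _; apply: foldl_mbr_homog.
- case=> [|c s] b; first by rewrite /dsum big_nil.
  by move=> _ e; rewrite /= foldl_rcons.
- by move=> b; have := dep_gt0 b; lia.
- move=> a b s e /=; rewrite -foldl_mbr_sum -foldl_mbrB.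
  by apply: foldl_mbr_ext => e'; apply: Dder.
Qed.

End Derivations.

Section GeneratedInDegreeOne.
Hypothesis generated : forall b, (1 < dep b)%N -> exists a b',
  [/\ dep a = 1%N, (dep b' < dep b)%N & forall c, cst a b' c = (c == b)%:R].

Lemma tanaka_eq0_deg1 n d E : tanaka n d E ->
  (forall a, dep a = 1%N -> forall s e, E (a :: s) e = 0) -> forall s e, E s e = 0.
Proof.
case: n => [//|n] [N _ _ _ R] E1 [|b s] e; first by apply: N; rewrite /dsum big_nil.
have [m] := ubnP (dep b); elim: m => // m IH in b s e *; rewrite ltnS => bm.
have [b1|b_gt1] := leqP (dep b) 1; first by apply: E1; have := dep_gt0 b; lia.
have [a [b' [a1 b'b ab']]] := generated b_gt1.
have := R a b' s e; rewrite (bigD1 b) //= big1 => [|c /negbTE cb]; last first.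
  by rewrite ab' cb mul0r.
by rewrite ab' eqxx mul1r addr0 (E1 a) // (IH b') ?sub0r ?oppr0 //; lia.
Qed.

Lemma tanaka0_eq0 n E : tanaka n 0 E ->
  (forall a, dep a = 1%N -> forall e, E [:: a] e = 0) -> forall s e, E s e = 0.
Proof.
move=> hE E1; apply: (tanaka_eq0_deg1 hE) => a a1 s e.
case: n hE => [//|n] [_ _ C _ _].
elim/last_ind: s e => [|s b IH] e; first exact: E1.
rewrite (C (a :: s)); last by rewrite dsum_cons; have := dep_gt0 a; lia.
by rewrite (mbr_ext b IH) mbr0.
Qed.

Lemma tanaka0_unique n E1 E2 : tanaka n 0 E1 -> tanaka n 0 E2 ->
  (forall a, dep a = 1%N -> forall e, E1 [:: a] e = E2 [:: a] e) ->
  forall s e, E1 s e = E2 s e.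
Proof.
move=> h1 h2 E12 s e; apply/eqP; rewrite -subr_eq0; apply/eqP.
by apply: (tanaka0_eq0 (tanaka_inB h1 h2)) => a a1 e' /=; rewrite E12 ?subrr.
Qed.

Lemma tanaka_pos_eq0 :
  (forall n E, tanaka n.+2 1 E ->
     forall a b, dep a = 1%N -> dep b = 1%N -> forall e, E [:: a; b] e = 0) ->
  forall d n E, (0 < d)%N -> tanaka n d E -> forall s e, E s e = 0.
Proof.
move=> g1_eq0 d; elim/ltn_ind: d => d IH n E d_gt0 hE.
apply: (tanaka_eq0_deg1 hE) => a a1 s e.
case: n hE => [//|n] hE; have [_ _ _ Da _] := hE.
have := Da a; rewrite a1 => /(_ d_gt0) hEa.
have [d_le1|d_gt1] := leqP d 1; last first.
  by apply: (IH (d - 1)%N _ n _ _ hEa); lia.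
have d1 : d = 1%N by lia.
subst d; rewrite subnn in hEa; case: n {Da} hE hEa => [//|n] hE hEa.
apply: (@tanaka0_eq0 n.+1 _ hEa) => b b1 e'.
exact: (g1_eq0 _ _ hE).
Qed.

End GeneratedInDegreeOne.
End Prolongation.

(** * The truncated free Lie algebra n_k *)

Section TruncatedFreeLieAlgebra.
Variables (F : fieldType) (k : nat).

Local Notation B := (nkB k).
Local Notation ii := (@nk_i k).
Local Notation jj := (@nk_j k).
Local Notation dep := (@nk_dep k).
Local Notation cst := (@nk_cst F k).
Local Notation br := (mbr cst).
Local Notation tanaka := (tanaka_in cst dep).

Definition nk_index (I J : nat) : bool :=
  ((I + J == 1)%N || (0 < I)%N && (0 < J)%N) && (I + J <= k)%N.

Lemma nk_indexP (b : B) : nk_index (ii b) (jj b).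
Proof.
case: b => [[i j]]; rewrite /nk_pred /nk_index /nk_i /nk_j /=.
by have := ltn_ord i; have := ltn_ord j; lia.
Qed.

Lemma nk_index_basis I J : nk_index I J -> exists b : B, ii b = I /\ jj b = J.
Proof.
move=> IJ; have I_lt : (I < k.+1)%N by move: IJ; rewrite /nk_index; lia.
have J_lt : (J < k.+1)%N by move: IJ; rewrite /nk_index; lia.
have P : nk_pred (Ordinal I_lt, Ordinal J_lt) by move: IJ; rewrite /nk_pred /nk_index /=; lia.
by exists (exist (fun x => is_true (nk_pred x)) _ P).
Qed.

Lemma nk_indexT I J : (0 < I)%N -> (0 < J)%N -> (I + J <= k)%N -> nk_index I J.
Proof. by rewrite /nk_index; lia. Qed.

Lemma nk_index_deg1 I J : (I + J = 1)%N -> (0 < k)%N -> nk_index I J.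
Proof. by rewrite /nk_index; lia. Qed.

Lemma nk_indexF I J : (k < I + J)%N -> nk_index I J = false.
Proof. by rewrite /nk_index => h; apply/negbTE/negP; lia. Qed.

Lemma nk_inj (a b : B) : ii a = ii b -> jj a = jj b -> a = b.
Proof.
case: a => [[i j] Pa]; case: b => [[i' j'] Pb]; rewrite /nk_i /nk_j /= => h1 h2.
by apply: val_inj => /=; congr pair; apply: val_inj.
Qed.

Lemma nk_dep_gt0 (b : B) : (0 < dep b)%N.
Proof. by have := nk_indexP b; rewrite /nk_index /nk_dep; lia. Qed.

Lemma nk_dep_le (b : B) : (dep b <= k)%N.
Proof. by have := nk_indexP b; rewrite /nk_index /nk_dep; lia. Qed.

Lemma nk_dep1 (a : B) : dep a = 1%N ->
  (ii a = 1%N /\ jj a = 0%N) \/ (ii a = 0%N /\ jj a = 1%N).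
Proof. by rewrite /nk_dep; lia. Qed.

Lemma nk_dep_gt1 (a : B) : dep a != 1%N -> (0 < ii a)%N /\ (0 < jj a)%N.
Proof. by have := nk_indexP a; rewrite /nk_index /nk_dep; lia. Qed.

(* [evec I J] is the coordinate vector of e_{IJ}; it is 0 when (I, J) indexes no basis vector. *)
Definition evec (I J : nat) (e : B) : F := ((ii e == I) && (jj e == J))%:R.

Definition coord (v : B -> F) (I J : nat) : F :=
  \sum_(a : B | (ii a == I) && (jj a == J)) v a.

Lemma evec_cases I J (a : B) :
  evec I J a = 0 \/ [/\ ii a = I, jj a = J & evec I J a = 1].
Proof.
by rewrite /evec; case: (ii a =P I) => [->|]; case: (jj a =P J) => [->|]; by [left | right].
Qed.

Lemma evec_eq0 I J e : (k < I + J)%N -> evec I J e = 0.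
Proof.
move=> h; case: (evec_cases I J e) => [//|[h1 h2 _]].
by have := nk_indexP e; rewrite h1 h2 nk_indexF.
Qed.

Lemma coord_basis v (b : B) I J : ii b = I -> jj b = J -> coord v I J = v b.
Proof. by move=> <- <-; rewrite /coord (big_pred1 b). Qed.

Lemma coord_eq0 v I J : ~~ nk_index I J -> coord v I J = 0.
Proof.
move=> H; rewrite /coord big_pred0 // => a.
by apply/andP => -[/eqP h1 /eqP h2]; move: H; rewrite -h1 -h2 nk_indexP.
Qed.

Definition nk_sign (i j i' j' : nat) : F :=
  if (i + j == 1)%N then
    if (i' + j' == 1)%N then
      (if (i == 1%N) && (j' == 1%N) then 1
       else if (j == 1%N) && (i' == 1%N) then -1 else 0)
    else 1
  else if (i' + j' == 1)%N then -1 else 0.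

Lemma nk_sgnE (a b : B) : nk_sgn F a b = nk_sign (ii a) (jj a) (ii b) (jj b).
Proof. by []. Qed.

Lemma nk_sign_1l I J i j : (I + J = 1)%N -> (i + j != 1)%N -> nk_sign I J i j = 1.
Proof. by rewrite /nk_sign => -> /negbTE ->. Qed.

Lemma nk_sign_1r I J i j : (I + J != 1)%N -> (i + j = 1)%N -> nk_sign I J i j = -1.
Proof. by rewrite /nk_sign => /negbTE -> ->. Qed.

Lemma nk_sign_0 I J i j : (I + J != 1)%N -> (i + j != 1)%N -> nk_sign I J i j = 0.
Proof. by rewrite /nk_sign => /negbTE -> /negbTE ->. Qed.

Lemma nk_sign_diag I J : nk_sign I J I J = 0.
Proof.
rewrite /nk_sign; case: eqP => // IJ1.
by have [[-> ->]|[-> ->]] : (I = 1 /\ J = 0 \/ I = 0 /\ J = 1)%N by lia.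
Qed.

Lemma nk_sign_xy : nk_sign 1 0 0 1 = 1. Proof. by []. Qed.
Lemma nk_sign_yx : nk_sign 0 1 1 0 = -1. Proof. by []. Qed.

Lemma nk_sgn_anti (a b : B) : nk_sgn F b a = - nk_sgn F a b.
Proof.
rewrite /nk_sgn; case: (dep a =P 1%N) => [/nk_dep1 ha|_];
  case: (dep b =P 1%N) => [/nk_dep1 hb|_]; rewrite ?opprK ?oppr0 //.
by case: ha hb => -[-> ->] [[-> ->]|[-> ->]]; rewrite /= ?oppr0 ?opprK.
Qed.

Lemma nk_cst_anti (a b c : B) : cst b a c = - cst a b c.
Proof.
by rewrite /nk_cst [(ii b + _)%N]addnC [(jj b + _)%N]addnC nk_sgn_anti; case: ifP; rewrite ?oppr0.
Qed.

Lemma nk_cst_graded (a b e : B) : cst a b e != 0 -> dep e = (dep a + dep b)%N.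
Proof.
rewrite /nk_cst; case: ifP => [/andP[/eqP h1 /eqP h2] _|]; last by rewrite eqxx.
by rewrite /nk_dep h1 h2; lia.
Qed.

Lemma sum_nk_cst (a b : B) (w : B -> F) :
  \sum_c cst a b c * w c = nk_sgn F a b * coord w (ii a + ii b) (jj a + jj b).
Proof.
rewrite /coord big_distrr /= [RHS]big_mkcond /=; apply: eq_bigr => c _.
by rewrite /nk_cst; case: ifP => _ //; rewrite mul0r.
Qed.

Lemma nk_generated (b : B) : (1 < dep b)%N -> exists a b' : B,
  [/\ dep a = 1%N, (dep b' < dep b)%N & forall c, cst a b' c = (c == b)%:R].
Proof.
move=> b_gt1; suff [a [b' [a1 b'b sg hi hj]]] : exists a b' : B, [/\ dep a = 1%N,
    (dep b' < dep b)%N, nk_sgn F a b' = 1, (ii a + ii b' = ii b)%N & (jj a + jj b' = jj b)%N].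
  exists a, b'; split=> // c; rewrite /nk_cst sg hi hj.
  case: (c =P b) => [->|cb]; first by rewrite !eqxx.
  by case: ifP => // /andP[/eqP ci /eqP cj]; case: cb; apply: nk_inj.
have [bi bj] : (0 < ii b)%N /\ (0 < jj b)%N.
  by apply: nk_dep_gt1; rewrite neq_ltn b_gt1 orbT.
have b_le := nk_dep_le b; rewrite /nk_dep in b_gt1 b_le *.
have [x [xi xj]] := nk_index_basis (nk_index_deg1 (I:=1) (J:=0) erefl ltac:(lia)).
have [y [yi yj]] := nk_index_basis (nk_index_deg1 (I:=0) (J:=1) erefl ltac:(lia)).
have [i_gt1|i_le1] := ltnP 1 (ii b).
  have [b' [b'i b'j]] : exists b' : B, ii b' = (ii b).-1 /\ jj b' = jj b.
    by apply: nk_index_basis; apply: nk_indexT => //; lia.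
  exists x, b'; rewrite nk_sgnE xi xj b'i b'j; split; try lia.
  by apply: nk_sign_1l; lia.
have [j_gt1|j_le1] := ltnP 1 (jj b).
  have [b' [b'i b'j]] : exists b' : B, ii b' = ii b /\ jj b' = (jj b).-1.
    by apply: nk_index_basis; apply: nk_indexT => //; lia.
  exists y, b'; rewrite nk_sgnE yi yj b'i b'j; split; try lia.
  by apply: nk_sign_1l; lia.
by exists x, y; rewrite nk_sgnE xi xj yi yj; split=> //; lia.
Qed.

Lemma mbr_evec I J (b : B) e :
  br (evec I J) b e =
  (if nk_index I J then nk_sign I J (ii b) (jj b) else 0) * evec (I + ii b) (J + jj b) e.
Proof.
rewrite /mbr; case: ifP => IJ; last first.
  rewrite mul0r big1 // => a _.
  case: (evec_cases I J a) => [->|[ai aj _]]; first by rewrite mul0r.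
  by move: IJ; rewrite -ai -aj nk_indexP.
have [a0 [a0i a0j]] := nk_index_basis IJ.
rewrite (bigD1 a0) //= big1 ?addr0 => [|a a_a0].
  rewrite /evec a0i a0j !eqxx mul1r /nk_cst a0i a0j nk_sgnE a0i a0j.
  by case: ifP; rewrite ?mulr1 ?mulr0.
case: (evec_cases I J a) => [->|[ai aj _]]; first by rewrite mul0r.
by move: a_a0; rewrite (nk_inj (a := a) (b := a0)) ?eqxx ?ai ?aj.
Qed.

Lemma mbr_evec2 (v : B -> F) c1 I1 J1 c2 I2 J2 b e :
  (forall e, v e = c1 * evec I1 J1 e + c2 * evec I2 J2 e) ->
  br v b e =
    c1 * ((if nk_index I1 J1 then nk_sign I1 J1 (ii b) (jj b) else 0)
          * evec (I1 + ii b) (J1 + jj b) e)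
  + c2 * ((if nk_index I2 J2 then nk_sign I2 J2 (ii b) (jj b) else 0)
          * evec (I2 + ii b) (J2 + jj b) e).
Proof.
move=> h; rewrite (mbr_ext _ b h) -!mbr_evec /mbr !big_distrr -big_split /=.
by apply: eq_bigr => a _; rewrite mulrDl !mulrA.
Qed.

Lemma mbr_evec3 (v : B -> F) c1 I1 J1 c2 I2 J2 c3 I3 J3 b e :
  (forall e, v e = c1 * evec I1 J1 e + c2 * evec I2 J2 e + c3 * evec I3 J3 e) ->
  br v b e =
    c1 * ((if nk_index I1 J1 then nk_sign I1 J1 (ii b) (jj b) else 0)
          * evec (I1 + ii b) (J1 + jj b) e)
  + c2 * ((if nk_index I2 J2 then nk_sign I2 J2 (ii b) (jj b) else 0)
          * evec (I2 + ii b) (J2 + jj b) e)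
  + c3 * ((if nk_index I3 J3 then nk_sign I3 J3 (ii b) (jj b) else 0)
          * evec (I3 + ii b) (J3 + jj b) e).
Proof.
move=> h; rewrite (mbr_ext _ b h) -!mbr_evec /mbr !big_distrr -!big_split /=.
by apply: eq_bigr => a _; rewrite !mulrDl !mulrA.
Qed.

Lemma mbr_deep_eq0 j (v : B -> F) b e :
  homog dep j v -> (j != 1)%N -> (dep b != 1)%N -> br v b e = 0.
Proof.
move=> hv j1 b1; rewrite /mbr big1 // => a _.
case: (v a =P 0) => [->|/eqP /hv va]; first by rewrite mul0r.
rewrite /nk_cst; case: ifP => _; last by rewrite mulr0.
by rewrite nk_sgnE nk_sign_0 ?mulr0 //; rewrite -/(nk_dep a) va.
Qed.

Ltac nat_simpl := rewrite ?(addn0, add0n, addSn, addnS).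
Ltac sign_simpl := rewrite ?(nk_sign_xy, nk_sign_yx, nk_sign_diag);
  repeat match goal with
  | |- context [nk_sign ?I ?J ?i ?j] => rewrite (@nk_sign_1l I J i j); [|lia|lia]
  | |- context [nk_sign ?I ?J ?i ?j] => rewrite (@nk_sign_1r I J i j); [|lia|lia]
  | |- context [nk_sign ?I ?J ?i ?j] => rewrite (@nk_sign_0 I J i j); [|lia|lia]
  | |- context [nk_index ?I ?J] => rewrite (@nk_index_deg1 I J); [|lia|lia]
  | |- context [nk_index ?I ?J] => rewrite (@nk_indexT I J); [|lia|lia|lia]
  | |- context [nk_index ?I ?J] => rewrite (@nk_indexF I J); [|lia]
  end.

Section Generators.
Variables x y : B.
Hypotheses (xi : ii x = 1%N) (xj : jj x = 0%N) (yi : ii y = 0%N) (yj : jj y = 1%N).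

Lemma dep_x : dep x = 1%N. Proof. by rewrite /nk_dep xi xj. Qed.
Lemma dep_y : dep y = 1%N. Proof. by rewrite /nk_dep yi yj. Qed.

Lemma nk_dep1_xy (a : B) : dep a = 1%N -> a = x \/ a = y.
Proof.
by move/nk_dep1 => [[ai aj]|[ai aj]]; [left|right]; apply: nk_inj; rewrite ?ai ?aj ?xi ?xj ?yi ?yj.
Qed.

Lemma homog1E (v : B -> F) : homog dep 1 v ->
  forall e, v e = v x * evec 1 0 e + v y * evec 0 1 e.
Proof.
move=> hv e; case: (dep e =P 1%N) => [/nk_dep1_xy [] ->|e1].
- by rewrite /evec xi xj /= mulr1 mulr0 addr0.
- by rewrite /evec yi yj /= mulr1 mulr0 add0r.
have -> : v e = 0 by apply/eqP; apply: contraT => /hv.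
have ev0 I J : (I + J = 1)%N -> evec I J e = 0.
  by case: (evec_cases I J e) => [//|[ei ej _] IJ]; case: e1; rewrite /nk_dep ei ej.
by rewrite !ev0 ?mulr0 ?addr0.
Qed.

Section DegreeZero.
Variables (G : seq B -> B -> F) (n0 : nat).
Hypothesis HG : tanaka n0.+1 0 G.

Lemma tanaka0_homog1 b : dep b = 1%N ->
  forall e, G [:: b] e = G [:: b] x * evec 1 0 e + G [:: b] y * evec 0 1 e.
Proof.
move=> b1; apply: homog1E; have [_ Gh _ _ _] := HG.
by have := Gh [:: b]; rewrite dsum1 b1; apply.
Qed.

Lemma tanaka0_cons2 a b e : G [:: a; b] e = br (G [:: a]) b e.
Proof. by have [_ _ C _ _] := HG; apply: (C [:: a]); rewrite dsum1 nk_dep_gt0. Qed.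

Lemma tanaka0_n1 n : (n.+1 < k)%N -> forall b, ii b = n.+1 -> jj b = 1%N -> forall e,
  G [:: b] e = (G [:: y] y + n.+1%:R * G [:: x] x) * evec n.+1 1 e
             + (n%:R * G [:: x] y) * evec n 2 e.
Proof.
have [_ _ _ _ R] := HG.
elim: n => [|n IH] n_lt b bi bj e.
  have := R x y [::] e.
  rewrite sum_nk_cst nk_sgnE xi xj yi yj (coord_basis _ (b:=b)) ?bi ?bj //.
  rewrite !tanaka0_cons2 (mbr_evec2 _ _ (tanaka0_homog1 dep_x)).
  rewrite (mbr_evec2 _ _ (tanaka0_homog1 dep_y)).
  by rewrite ?xi ?xj ?yi ?yj; nat_simpl; sign_simpl; rewrite mul1r => ->; ring.
have [b' [b'i b'j]] := nk_index_basis (nk_indexT (I:=n.+1) (J:=1) isT isT ltac:(lia)).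
have := R x b' [::] e.
rewrite sum_nk_cst nk_sgnE xi xj b'i b'j; nat_simpl; rewrite (coord_basis _ (b:=b)) ?bi ?bj //.
rewrite !tanaka0_cons2 (mbr_evec2 _ _ (tanaka0_homog1 dep_x)).
rewrite (mbr_evec2 _ _ (IH _ b' b'i b'j)); last lia.
rewrite ?xi ?xj ?b'i ?b'j; nat_simpl; sign_simpl.
by case: n {IH b'i} bi n_lt => [|n] bi n_lt; sign_simpl; rewrite mul1r => ->; ring.
Qed.

Lemma tanaka0_1n n : (n.+1 < k)%N -> forall b, ii b = 1%N -> jj b = n.+1 -> forall e,
  G [:: b] e = (G [:: x] x + n.+1%:R * G [:: y] y) * evec 1 n.+1 e
             + (n%:R * G [:: y] x) * evec 2 n e.
Proof.
have [_ _ _ _ R] := HG.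
elim: n => [|n IH] n_lt b bi bj e.
  have := R x y [::] e.
  rewrite sum_nk_cst nk_sgnE xi xj yi yj (coord_basis _ (b:=b)) ?bi ?bj //.
  rewrite !tanaka0_cons2 (mbr_evec2 _ _ (tanaka0_homog1 dep_x)).
  rewrite (mbr_evec2 _ _ (tanaka0_homog1 dep_y)).
  by rewrite ?xi ?xj ?yi ?yj; nat_simpl; sign_simpl; rewrite mul1r => ->; ring.
have [b' [b'i b'j]] := nk_index_basis (nk_indexT (I:=1) (J:=n.+1) isT isT ltac:(lia)).
have := R y b' [::] e.
rewrite sum_nk_cst nk_sgnE yi yj b'i b'j; nat_simpl; rewrite (coord_basis _ (b:=b)) ?bi ?bj //.
rewrite !tanaka0_cons2 (mbr_evec2 _ _ (tanaka0_homog1 dep_y)).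
rewrite (mbr_evec2 _ _ (IH _ b' b'i b'j)); last lia.
rewrite ?yi ?yj ?b'i ?b'j; nat_simpl; sign_simpl.
by case: n {IH b'j} bj n_lt => [|n] bj n_lt; sign_simpl; rewrite mul1r => ->; ring.
Qed.

End DegreeZero.

Section Extension.
Hypothesis k_gt1 : (1 < k)%N.
Variable phi : B -> B -> F.
Hypothesis phi_homog : forall b, dep b = 1%N -> homog dep 1 (phi b).

(* The Leibniz rule forces this value on e_{ij} = [e10, ..., [e10, [e01, ..., e11]]];
   the [i.-1], [j.-1] terms carry the coefficient 0 when i = 1 or j = 1. *)
Definition der_deep (i j : nat) (e : B) : F :=
  (i%:R * phi x x + j%:R * phi y y) * evec i j e + (i.-1%:R * phi x y) * evec i.-1 j.+1 e
  + (j.-1%:R * phi y x) * evec i.+1 j.-1 e.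

Definition der_ext (c : B) : B -> F :=
  if (dep c == 1)%N then phi c else der_deep (ii c) (jj c).

Lemma der_ext1 c : dep c = 1%N -> der_ext c = phi c.
Proof. by rewrite /der_ext => ->. Qed.

Lemma der_ext_deep c : dep c != 1%N -> der_ext c = der_deep (ii c) (jj c).
Proof. by rewrite /der_ext => /negbTE ->. Qed.

Lemma der_ext_homog c : homog dep (dep c) (der_ext c).
Proof.
case: (dep c =P 1%N) => [c1|/eqP c1]; first by rewrite der_ext1 // c1; apply: phi_homog.
have [ci cj] := nk_dep_gt1 c1; rewrite der_ext_deep // => e; rewrite /der_deep.
have [E1|[ei ej _]] := evec_cases (ii c) (jj c) e; last by rewrite /nk_dep ei ej.
have [E2|[ei ej _]] := evec_cases (ii c).-1 (jj c).+1 e; last by rewrite /nk_dep ei ej; lia.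
have [E3|[ei ej _]] := evec_cases (ii c).+1 (jj c).-1 e; last by rewrite /nk_dep ei ej; lia.
by rewrite E1 E2 E3 !mulr0 !addr0 eqxx.
Qed.

Lemma der_ext_x b i j e : ii b = i.+1 -> jj b = j.+1 ->
  \sum_c cst x b c * der_ext c e = br (der_ext x) b e - br (der_ext b) x e.
Proof.
move=> bi bj; have b1 : dep b != 1%N by rewrite /nk_dep bi bj; lia.
have b_le : (i.+1 + j.+1 <= k)%N by rewrite -bi -bj; apply: nk_dep_le.
rewrite sum_nk_cst nk_sgnE xi xj bi bj nk_sign_1l //; last by lia.
rewrite mul1r der_ext1 ?dep_x //.
rewrite der_ext_deep // bi bj; nat_simpl.
rewrite (mbr_evec2 _ _ (homog1E (phi_homog dep_x))).
rewrite (mbr_evec3 _ _ (fun e => erefl (der_deep i.+1 j.+1 e))) bi bj xi xj; nat_simpl.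
have [ij|ij] := boolP (nk_index i.+2 j.+1); last first.
  have ij_gt : (k < i.+2 + j.+1)%N by move: ij; rewrite /nk_index; lia.
  by rewrite coord_eq0 //= !evec_eq0 ?mulr0 ?addr0 ?subr0 //; lia.
have [c [ci cj]] := nk_index_basis ij.
rewrite (coord_basis _ (b:=c)) // der_ext_deep; last by rewrite /nk_dep ci cj; lia.
rewrite /der_deep ci cj /=; sign_simpl.
by case: i ij b_le {bi ci} => [|i] ij b_le; case: j ij b_le {bj cj} => [|j] ij b_le;
  sign_simpl; ring.
Qed.

Lemma der_ext_y b i j e : ii b = i.+1 -> jj b = j.+1 ->
  \sum_c cst y b c * der_ext c e = br (der_ext y) b e - br (der_ext b) y e.
Proof.
move=> bi bj; have b1 : dep b != 1%N by rewrite /nk_dep bi bj; lia.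
have b_le : (i.+1 + j.+1 <= k)%N by rewrite -bi -bj; apply: nk_dep_le.
rewrite sum_nk_cst nk_sgnE yi yj bi bj nk_sign_1l //; last by lia.
rewrite mul1r der_ext1 ?dep_y //.
rewrite der_ext_deep // bi bj; nat_simpl.
rewrite (mbr_evec2 _ _ (homog1E (phi_homog dep_y))).
rewrite (mbr_evec3 _ _ (fun e => erefl (der_deep i.+1 j.+1 e))) bi bj yi yj; nat_simpl.
have [ij|ij] := boolP (nk_index i.+1 j.+2); last first.
  have ij_gt : (k < i.+1 + j.+2)%N by move: ij; rewrite /nk_index; lia.
  by rewrite coord_eq0 //= !evec_eq0 ?mulr0 ?addr0 ?subr0 //; lia.
have [c [ci cj]] := nk_index_basis ij.
rewrite (coord_basis _ (b:=c)) // der_ext_deep; last by rewrite /nk_dep ci cj; lia.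
rewrite /der_deep ci cj /=; sign_simpl.
by case: i ij b_le {bi ci} => [|i] ij b_le; case: j ij b_le {bj cj} => [|j] ij b_le;
  sign_simpl; ring.
Qed.

Lemma der_ext_xy e :
  \sum_c cst x y c * der_ext c e = br (der_ext x) y e - br (der_ext y) x e.
Proof.
have [c [ci cj]] := nk_index_basis (nk_indexT (I:=1) (J:=1) isT isT k_gt1).
rewrite sum_nk_cst nk_sgnE xi xj yi yj (coord_basis _ (b:=c)) //.
rewrite der_ext_deep ?(der_ext1 dep_x) ?(der_ext1 dep_y); last by rewrite /nk_dep ci cj.
rewrite /der_deep ci cj (mbr_evec2 _ _ (homog1E (phi_homog dep_x))).
rewrite (mbr_evec2 _ _ (homog1E (phi_homog dep_y))) xi xj yi yj; nat_simpl; sign_simpl.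
by rewrite /=; ring.
Qed.

Lemma der_ext_rule a b e :
  \sum_c cst a b c * der_ext c e = br (der_ext a) b e - br (der_ext b) a e.
Proof.
have rule1 a' b' : dep a' = 1%N ->
    \sum_c cst a' b' c * der_ext c e = br (der_ext a') b' e - br (der_ext b') a' e.
  move=> /nk_dep1_xy a'_xy; case: (dep b' =P 1%N) => [/nk_dep1_xy|/eqP /nk_dep_gt1 [bi bj]].
    case: a'_xy => -> [] ->; rewrite ?der_ext_xy ?(der_rule_anti nk_cst_anti (der_ext_xy e)) //;
      by rewrite sum_nk_cst nk_sgnE nk_sign_diag mul0r subrr.
  have [i [j [b'i b'j]]] : exists i j, ii b' = i.+1 /\ jj b' = j.+1.
    by exists (ii b').-1, (jj b').-1; lia.
  by case: a'_xy => ->; [apply: der_ext_x b'i b'j | apply: der_ext_y b'i b'j].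
case: (dep a =P 1%N) => [/rule1 //|/eqP a1].
case: (dep b =P 1%N) => [/rule1 rule_ba|/eqP b1].
  exact: der_rule_anti nk_cst_anti (rule_ba a).
rewrite sum_nk_cst nk_sgnE nk_sign_0 ?mul0r //.
by rewrite (mbr_deep_eq0 _ (der_ext_homog (c:=a))) ?(mbr_deep_eq0 _ (der_ext_homog (c:=b))) ?subr0.
Qed.

Lemma tanaka_der_ext : tanaka 1 0 (tanaka_of_der cst der_ext).
Proof.
exact: (tanaka_of_derP nk_dep_gt0 nk_cst_graded der_ext_homog der_ext_rule).
Qed.

End Extension.

(** * Vanishing of g_1 *)

Section DegreeOne.
Hypothesis char_F : [pchar F] =i pred0.
Hypothesis k_gt3 : (3 < k)%N.
Variables (E : seq B -> B -> F) (n0 : nat).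
Hypothesis HE : tanaka n0.+2 1 E.

Lemma natr_mul_eq0 (N : nat) (a : F) : (0 < N)%N -> N%:R * a = 0 -> a = 0.
Proof.
by move=> N_gt0 /eqP; rewrite mulf_eq0 (pcharf0P F).1 // gtn_eqF //= => /eqP.
Qed.

Lemma deg1_tanaka0 a : dep a = 1%N -> tanaka n0.+1 0 (fun s => E (a :: s)).
Proof. by have [_ _ _ D _] := HE; move=> a1; have := D a; rewrite a1 subnn; apply. Qed.

Lemma deg1_cons2 a b e : (1 < dep a)%N -> E [:: a; b] e = br (E [:: a]) b e.
Proof. by have [_ _ C _ _] := HE; move=> a_gt1; apply: (C [:: a]); rewrite dsum1. Qed.

Lemma deg1_homog b : (1 < dep b)%N -> homog dep (dep b - 1) (E [:: b]).
Proof. by have [_ H _ _ _] := HE; move=> b_gt1; have := H [:: b]; rewrite dsum1; apply. Qed.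

Lemma deg1_rule a b e : \sum_c cst a b c * E [:: c] e = E [:: a; b] e - E [:: b; a] e.
Proof. by have [_ _ _ _ R] := HE; apply: R. Qed.

Lemma deg1_top a b e : dep a = 1%N -> dep b = k -> E [:: a; b] e = br (E [:: b]) a e.
Proof.
move=> a1 bk; rewrite -deg1_cons2 ?bk; last lia.
apply/eqP; rewrite -subr_eq0 -deg1_rule.
by rewrite sum_nk_cst coord_eq0 ?mulr0 // nk_indexF //; move: a1 bk; rewrite /nk_dep; lia.
Qed.

Lemma deg1_e11 c : ii c = 1%N -> jj c = 1%N ->
  forall e, E [:: c] e = E [:: x; y] e - E [:: y; x] e.
Proof.
move=> ci cj e; rewrite -deg1_rule sum_nk_cst nk_sgnE xi xj yi yj.
by rewrite (coord_basis _ (b:=c)) // nk_sign_xy mul1r.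
Qed.

Lemma deg1_e11_eq0 c : ii c = 1%N -> jj c = 1%N -> forall e, E [:: c] e = 0.
Proof.
move=> ci cj.
have [c21 [c21i c21j]] := nk_index_basis (nk_indexT (I:=2) (J:=1) isT isT ltac:(lia)).
have [c31 [c31i c31j]] := nk_index_basis (nk_indexT (I:=3) (J:=1) isT isT ltac:(lia)).
have [c22 [c22i c22j]] := nk_index_basis (nk_indexT (I:=2) (J:=2) isT isT ltac:(lia)).
have c2 : dep c = 2%N by rewrite /nk_dep ci cj.
have c21_3 : dep c21 = 3%N by rewrite /nk_dep c21i c21j.
have hc : homog dep 1 (E [:: c]) by have := deg1_homog (b:=c); rewrite c2; apply.
(* [u e11, e21] = 0: [e11, e21] = 0, and [u e21, e11] vanishes by depth. *)
have br_c_c21 e : br (E [:: c]) c21 e = 0.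
  have := deg1_rule c c21 e.
  rewrite sum_nk_cst nk_sgnE ci cj c21i c21j nk_sign_0 // mul0r.
  rewrite !deg1_cons2 ?c2 ?c21_3 // (mbr_deep_eq0 (j:=2) (v:=E [:: c21])) ?c2 ?subr0 //.
  by have := deg1_homog (b:=c21); rewrite c21_3; apply.
have H1 := br_c_c21 c31; have H2 := br_c_c21 c22.
rewrite (mbr_evec2 _ _ (homog1E hc)) c21i c21j /evec c31i c31j /= in H1.
rewrite (mbr_evec2 _ _ (homog1E hc)) c21i c21j /evec c22i c22j /= in H2.
have cx0 : E [:: c] x = 0 by move: H1; sign_simpl; rewrite /= !mulr1 !mulr0 addr0.
have cy0 : E [:: c] y = 0 by move: H2; sign_simpl; rewrite /= !mulr1 !mulr0 add0r.
by move=> e; rewrite (homog1E hc) cx0 cy0 !mul0r addr0.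
Qed.

Lemma deg1_n1 n : (n.+1 < k)%N -> forall b, ii b = n.+1 -> jj b = 1%N -> forall e,
  E [:: b] e = (n%:R * E [:: x; y] y + 'C(n.+1, 2)%:R * E [:: x; x] x) * evec n 1 e
             + ('C(n, 2)%:R * E [:: x; x] y) * evec n.-1 2 e.
Proof.
elim: n => [|n IH] n_lt b bi bj e; first by rewrite (deg1_e11_eq0 bi bj) !bin_small //; ring.
have [b' [b'i b'j]] := nk_index_basis (nk_indexT (I:=n.+1) (J:=1) isT isT ltac:(lia)).
have n_lt' : (n.+1 < k)%N by lia.
have := deg1_rule x b' e.
rewrite sum_nk_cst nk_sgnE xi xj b'i b'j; nat_simpl; rewrite (coord_basis _ (b:=b)) ?bi ?bj //.
have g := tanaka0_n1 (deg1_tanaka0 dep_x) n_lt' b'i b'j e; cbv beta in g.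
rewrite g (deg1_cons2 (a:=b')); last first.
  by rewrite /nk_dep b'i b'j; lia.
rewrite (mbr_evec2 _ _ (IH n_lt' b' b'i b'j)) ?xi ?xj; nat_simpl; sign_simpl.
case: n {IH g b'i n_lt'} bi n_lt => [|[|n]] bi n_lt; sign_simpl; rewrite mul1r => ->;
  rewrite ?binS ?bin0 ?bin1 ?bin0n /=; ring.
Qed.

Lemma deg1_1n n : (n.+1 < k)%N -> forall b, ii b = 1%N -> jj b = n.+1 -> forall e,
  E [:: b] e = (n%:R * E [:: y; x] x + 'C(n.+1, 2)%:R * E [:: y; y] y) * evec 1 n e
             + ('C(n, 2)%:R * E [:: y; y] x) * evec 2 n.-1 e.
Proof.
elim: n => [|n IH] n_lt b bi bj e; first by rewrite (deg1_e11_eq0 bi bj) !bin_small //; ring.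
have [b' [b'i b'j]] := nk_index_basis (nk_indexT (I:=1) (J:=n.+1) isT isT ltac:(lia)).
have n_lt' : (n.+1 < k)%N by lia.
have := deg1_rule y b' e.
rewrite sum_nk_cst nk_sgnE yi yj b'i b'j; nat_simpl; rewrite (coord_basis _ (b:=b)) ?bi ?bj //.
have g := tanaka0_1n (deg1_tanaka0 dep_y) n_lt' b'i b'j e; cbv beta in g.
rewrite g (deg1_cons2 (a:=b')); last first.
  by rewrite /nk_dep b'i b'j; lia.
rewrite (mbr_evec2 _ _ (IH n_lt' b' b'i b'j)) ?yi ?yj; nat_simpl; sign_simpl.
case: n {IH g b'j n_lt'} bj n_lt => [|[|n]] bj n_lt; sign_simpl; rewrite mul1r => ->;
  rewrite ?binS ?bin0 ?bin1 ?bin0n /=; ring.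
Qed.

Ltac eq_simpl := repeat match goal with
  | |- context [(?a == ?b)%N] =>
      (have -> : (a == b)%N = true by lia) || (have -> : (a == b)%N = false by lia)
  end.

Lemma deg1_x_eq0 : [/\ E [:: x; x] x = 0, E [:: x; x] y = 0 & E [:: x; y] y = 0].
Proof.
have [m km] : exists m, k = m.+4 by exists (k - 4)%N; lia.
have m_lt : (m.+3 < k)%N by lia.
have [bx [bxi bxj]] := nk_index_basis (nk_indexT (I:=m.+3) (J:=1) isT isT ltac:(lia)).
have [cx [cxi cxj]] := nk_index_basis (nk_indexT (I:=m.+2) (J:=2) isT isT ltac:(lia)).
have [bY [bYi bYj]] := nk_index_basis (nk_indexT (I:=1) (J:=m.+3) isT isT ltac:(lia)).
have top_x b e : ii b + jj b = k -> E [:: x; b] e = br (E [:: b]) x e.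
  by move=> bk; apply: deg1_top dep_x _.
set a1 := E [:: x; x] x; set a2 := E [:: x; x] y; set a4 := E [:: x; y] y.
set C2 := 'C(m.+2, 2); set C3 := 'C(m.+3, 2).
have eq41 : a1 + m.+3%:R * a4 = 0.
  have := top_x bY bY ltac:(rewrite bYi bYj; lia).
  have := tanaka0_1n (deg1_tanaka0 dep_x) m_lt bYi bYj bY; cbv beta => ->.
  rewrite (mbr_evec2 _ _ (deg1_1n m_lt bYi bYj)) xi xj; nat_simpl; sign_simpl.
  by rewrite /evec bYi bYj; eq_simpl; rewrite /= mulr1 !mulr0 !addr0; apply.
have eq11 : a4 + m.+3%:R * a1 = - (m.+2%:R * a4 + C3%:R * a1).
  have := top_x bx bx ltac:(rewrite bxi bxj; lia).
  have := tanaka0_n1 (deg1_tanaka0 dep_x) m_lt bxi bxj bx; cbv beta => ->.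
  rewrite (mbr_evec2 _ _ (deg1_n1 m_lt bxi bxj)) xi xj; nat_simpl; sign_simpl.
  by rewrite /evec bxi bxj; eq_simpl; rewrite /= !mulr1 !mulr0 mulrN1 !addr0; apply.
have eq12 : m.+2%:R * a2 = - (C2%:R * a2).
  have := top_x bx cx ltac:(rewrite bxi bxj; lia).
  have := tanaka0_n1 (deg1_tanaka0 dep_x) m_lt bxi bxj cx; cbv beta => ->.
  rewrite (mbr_evec2 _ _ (deg1_n1 m_lt bxi bxj)) xi xj; nat_simpl; sign_simpl.
  by rewrite /evec cxi cxj; eq_simpl; rewrite /= !mulr1 !mulr0 mulrN1 !add0r; apply.
have a4_0 : a4 = 0.
  apply: (@natr_mul_eq0 (m.+3 * (m.+2 + C3))); first by rewrite muln_gt0.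
  rewrite (_ : _ * a4 = (m.+3 + C3)%:R * (a1 + m.+3%:R * a4)
                        - (a4 + m.+3%:R * a1 + (m.+2%:R * a4 + C3%:R * a1))); last ring.
  by rewrite eq41 eq11 addNr mulr0 subr0.
split=> //; last first.
  by apply: (@natr_mul_eq0 (m.+2 + C2)) => //; rewrite natrD mulrDl eq12 addNr.
by move/eqP: eq41; rewrite a4_0 mulr0 addr0 => /eqP.
Qed.

Lemma deg1_y_eq0 : [/\ E [:: y; y] y = 0, E [:: y; y] x = 0 & E [:: y; x] x = 0].
Proof.
have [m km] : exists m, k = m.+4 by exists (k - 4)%N; lia.
have m_lt : (m.+3 < k)%N by lia.
have [bx [bxi bxj]] := nk_index_basis (nk_indexT (I:=m.+3) (J:=1) isT isT ltac:(lia)).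
have [cy [cyi cyj]] := nk_index_basis (nk_indexT (I:=2) (J:=m.+2) isT isT ltac:(lia)).
have [bY [bYi bYj]] := nk_index_basis (nk_indexT (I:=1) (J:=m.+3) isT isT ltac:(lia)).
have top_y b e : ii b + jj b = k -> E [:: y; b] e = br (E [:: b]) y e.
  by move=> bk; apply: deg1_top dep_y _.
set a1 := E [:: y; y] y; set a2 := E [:: y; y] x; set a4 := E [:: y; x] x.
set C2 := 'C(m.+2, 2); set C3 := 'C(m.+3, 2).
have eq41 : a1 + m.+3%:R * a4 = 0.
  have := top_y bx bx ltac:(rewrite bxi bxj; lia).
  have := tanaka0_n1 (deg1_tanaka0 dep_y) m_lt bxi bxj bx; cbv beta => ->.
  rewrite (mbr_evec2 _ _ (deg1_n1 m_lt bxi bxj)) yi yj; nat_simpl; sign_simpl.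
  by rewrite /evec bxi bxj; eq_simpl; rewrite /= mulr1 !mulr0 !addr0; apply.
have eq11 : a4 + m.+3%:R * a1 = - (m.+2%:R * a4 + C3%:R * a1).
  have := top_y bY bY ltac:(rewrite bYi bYj; lia).
  have := tanaka0_1n (deg1_tanaka0 dep_y) m_lt bYi bYj bY; cbv beta => ->.
  rewrite (mbr_evec2 _ _ (deg1_1n m_lt bYi bYj)) yi yj; nat_simpl; sign_simpl.
  by rewrite /evec bYi bYj; eq_simpl; rewrite /= !mulr1 !mulr0 mulrN1 !addr0; apply.
have eq12 : m.+2%:R * a2 = - (C2%:R * a2).
  have := top_y bY cy ltac:(rewrite bYi bYj; lia).
  have := tanaka0_1n (deg1_tanaka0 dep_y) m_lt bYi bYj cy; cbv beta => ->.
  rewrite (mbr_evec2 _ _ (deg1_1n m_lt bYi bYj)) yi yj; nat_simpl; sign_simpl.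
  by rewrite /evec cyi cyj; eq_simpl; rewrite /= !mulr1 !mulr0 mulrN1 !add0r; apply.
have a4_0 : a4 = 0.
  apply: (@natr_mul_eq0 (m.+3 * (m.+2 + C3))); first by rewrite muln_gt0.
  rewrite (_ : _ * a4 = (m.+3 + C3)%:R * (a1 + m.+3%:R * a4)
                        - (a4 + m.+3%:R * a1 + (m.+2%:R * a4 + C3%:R * a1))); last ring.
  by rewrite eq41 eq11 addNr mulr0 subr0.
split=> //; last first.
  by apply: (@natr_mul_eq0 (m.+2 + C2)) => //; rewrite natrD mulrDl eq12 addNr.
by move/eqP: eq41; rewrite a4_0 mulr0 addr0 => /eqP.
Qed.

Lemma deg1_eq0 a b : dep a = 1%N -> dep b = 1%N -> forall e, E [:: a; b] e = 0.
Proof.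
have [xxx xxy xyy] := deg1_x_eq0; have [yyy yyx yxx] := deg1_y_eq0.
have [c [ci cj]] := nk_index_basis (nk_indexT (I:=1) (J:=1) isT isT ltac:(lia)).
have xy_yx e' : E [:: x; y] e' = E [:: y; x] e'.
  by apply/eqP; rewrite -subr_eq0 -(deg1_e11 ci cj) (deg1_e11_eq0 ci cj).
move=> a1 b1 e; rewrite (tanaka0_homog1 (deg1_tanaka0 a1) b1 e) /=.
have [->|->] := nk_dep1_xy a1; have [->|->] := nk_dep1_xy b1.
- by rewrite xxx xxy !mul0r addr0.
- by rewrite xy_yx yxx xyy !mul0r addr0.
- by rewrite yxx -xy_yx xyy !mul0r addr0.
- by rewrite yyx yyy !mul0r addr0.
Qed.

End DegreeOne.

End Generators.

End TruncatedFreeLieAlgebra.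

Theorem theorem6 (F : fieldType) (hF : [pchar F] =i pred0) (k : nat) (hk : (3 < k)%N) :
  (forall d : nat, (0 < d)%N ->
     forall E : seq (nkB k) -> nkB k -> F,
       tanaka_comp (@nk_cst F k) (@nk_dep k) d E ->
       forall s e, E s e = 0)
  /\
  (forall phi : nkB k -> nkB k -> F,
     (forall b, nk_dep b = 1%N -> homog (@nk_dep k) 1 (phi b)) ->
     exists E : seq (nkB k) -> nkB k -> F,
       tanaka_comp (@nk_cst F k) (@nk_dep k) 0 E /\
       forall b, nk_dep b = 1%N -> forall e, E [:: b] e = phi b e)
  /\
  (forall E1 E2 : seq (nkB k) -> nkB k -> F,
     tanaka_comp (@nk_cst F k) (@nk_dep k) 0 E1 ->
     tanaka_comp (@nk_cst F k) (@nk_dep k) 0 E2 ->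
     (forall b, nk_dep b = 1%N -> forall e, E1 [:: b] e = E2 [:: b] e) ->
     forall s e, E1 s e = E2 s e).
Proof.
have k_gt0 : (0 < k)%N by lia.
have [x [xi xj]] := nk_index_basis (nk_index_deg1 (I:=1) (J:=0) erefl k_gt0).
have [y [yi yj]] := nk_index_basis (nk_index_deg1 (I:=0) (J:=1) erefl k_gt0).
have generated := @nk_generated F k.
split; [|split].
- move=> d d_gt0 E hE; apply: (tanaka_pos_eq0 (@nk_dep_gt0 k) generated _ d_gt0 hE) => n E' hE'.
  exact: (deg1_eq0 xi xj yi yj hF hk hE').
- move=> phi phi_homog; exists (tanaka_of_der (@nk_cst F k) (der_ext x y phi)); split.
    by apply: tanaka_der_ext => //; lia.
  by move=> b b1 e; rewrite /= der_ext1.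
- by move=> E1 E2 h1 h2; apply: (tanaka0_unique (@nk_dep_gt0 k) generated h1 h2).
Qed.
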